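(* Let $(X,\rho)$ be a metric space, $f:X\to X$ continuous, $x\in X$, $\ell\in\mathbb N$, $n\ge2$ an integer and $\varepsilon>0$. Define $\Delta_\ell$ by \[ C_\ell(x,n,\varepsilon)=\frac1{n^2}\Big[\sum_{l\ge\ell}(l-\ell+1)N_l(x,n,\varepsilon)+n+\Delta_\ell\Big]. \] Then $0\le\Delta_\ell\le2(\ell-1)(n-1)$.
   Context: Bowen metric: $\rho_\ell(y,z)=\max_{0\le i<\ell}\rho(f^iy,f^iz)$. Correlation sum: $C_\ell(x,n,\varepsilon)=n^{-2}\#\{(i,j):0\le i,j<n,\ \rho_\ell(f^ix,f^jx)\le\varepsilon\}$. Recurrence plot $R(x,n,\varepsilon)$: the $n\times n$ matrix indexed by $0\le i,j<n$ with entry $1$ if $\rho(f^ix,f^jx)\le\varepsilon$ and $0$ otherwise. A line of length $\ell$ in it is a triple $(i,j,\ell)$ of integers with $0\le i,j\le n-\ell$, $i\ne j$, entries $(i+k,j+k)$ equal to $1$ for all $0\le k<\ell$, entry $(i-1,j-1)$ equal to $0$ if $\min\{i,j\}>0$, and entry $(i+\ell,j+\ell)$ equal to $0$ if $\max\{i,j\}<n-\ell$. $N_l(x,n,\varepsilon)$ is the number of lines of length exactly $l$ (including lines with $\min\{i,j\}=0$ or $\max\{i,j\}=n-l$). *)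

From HB Require Import structures.
From mathcomp Require Import all_boot all_order all_algebra.
From mathcomp Require Import all_classical all_reals all_analysis.
Set Implicit Arguments. Unset Strict Implicit. Unset Printing Implicit Defensive.
Import Order.TTheory GRing.Theory Num.Theory.
Local Open Scope ring_scope.

Section RQA.
Context {R : realType} {X : metricType R} (f : X -> X).

(* Bowen metric rho_l(y,z) = max_{0 <= i < l} rho(f^i y, f^i z)
   (distances are >= 0, so 0 is a neutral element for the max). *)
Definition bowen (l : nat) (y z : X) : R :=
  \big[Num.max/0]_(k < l) mdist (iter k f y) (iter k f z).

Definition corr_sum (l : nat) (x : X) (n : nat) (eps : R) : R :=
  (n%:R ^+ 2)^-1 *
  #|[set p : 'I_n * 'I_n | bowen l (iter p.1 f x) (iter p.2 f x) <= eps]|%:R.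

Definition rp_entry (x : X) (eps : R) (i j : nat) : bool :=
  mdist (iter i f x) (iter j f x) <= eps.

Definition is_line (x : X) (n : nat) (eps : R) (i j l : nat) : bool :=
  [&& (i + l <= n)%N, (j + l <= n)%N, i != j,
      [forall k : 'I_l, rp_entry x eps (i + k) (j + k)],
      (0 < minn i j)%N ==> ~~ rp_entry x eps i.-1 j.-1
    & (maxn i j < n - l)%N ==> ~~ rp_entry x eps (i + l) (j + l)].

(* N_l(x,n,eps): number of lines of length exactly l
   (indices satisfy 0 <= i,j <= n - l <= n). *)
Definition nlines (x : X) (n : nat) (eps : R) (l : nat) : nat :=
  #|[set p : 'I_n.+1 * 'I_n.+1 | is_line x n eps p.1 p.2 l]|.

End RQA.

From HB Require Import structures.
From mathcomp Require Import all_boot all_order all_algebra.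
From mathcomp Require Import all_classical all_reals all_analysis.
From mathcomp Require Import zify ring.
Import Order.TTheory GRing.Theory Num.Theory.

Set Implicit Arguments. Unset Strict Implicit. Unset Printing Implicit Defensive.

(* n^2 C_l counts the pairs (i, j) in [0, n)^2 whose diagonal run of length l
   in the (unbounded) recurrence matrix consists of ones.  These are the n
   diagonal pairs, the off-diagonal runs lying inside the n x n plot, and the
   off-diagonal runs sticking out of it.  Every run inside the plot sits on
   exactly one line, and a line of length k carries k - l + 1 such runs, so the
   middle count is sum_k (k - l + 1) N_k and Delta counts the overhanging runs.
   Those start in one of the last l - 1 rows or columns, off the diagonal,
   whence Delta <= 2 (l - 1)(n - 1). *)

Definition count2 (k : nat) (F : nat -> nat -> bool) : nat :=
  \sum_(0 <= i < k) \sum_(0 <= j < k) (F i j : nat).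

Lemma card_pairs_count2 k (P : nat -> nat -> bool) :
  #|[set p : 'I_k * 'I_k | P p.1 p.2]| = count2 k P.
Proof.
rewrite /count2 big_mkord; under eq_bigr do rewrite big_mkord.
rewrite pair_big /= -sum1_card big_mkcond /=.
by apply: eq_bigr => p _; rewrite inE; case: (P _ _).
Qed.

Lemma eq_count2 k (F G : nat -> nat -> bool) :
  (forall i j, F i j = G i j) -> count2 k F = count2 k G.
Proof. by move=> FG; apply: eq_bigr => i _; apply: eq_bigr => j _; rewrite FG. Qed.

Lemma count2_add k (F G H : nat -> nat -> bool) :
  (forall i j, (F i j : nat) = G i j + H i j) ->
  count2 k F = count2 k G + count2 k H.
Proof.
move=> FGH; rewrite /count2 -big_split; apply: eq_bigr => i _.
by rewrite -big_split; apply: eq_bigr => j _.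
Qed.

Lemma count2_shift k (F : nat -> nat -> bool) :
  (forall j, F 0 j = false) -> (forall i, F i 0 = false) ->
  count2 k.+1 F = count2 k (fun i j => F i.+1 j.+1).
Proof.
move=> F0j Fi0; rewrite /count2 big_nat_recl // big1 ?add0n => [|j _]; last first.
  by rewrite F0j.
by apply: eq_bigr => i _; rewrite big_nat_recl // Fi0.
Qed.

Lemma count2_shrink k (F : nat -> nat -> bool) :
  (forall j, F k j = false) -> (forall i, F i k = false) ->
  count2 k.+1 F = count2 k F.
Proof.
move=> Fkj Fik; rewrite /count2 big_nat_recr //=.
rewrite [X in _ + X]big1 ?addn0 => [|j _]; last by rewrite Fkj.
by apply: eq_bigr => i _; rewrite big_nat_recr //= Fik addn0.
Qed.

Lemma count2_diag k : count2 k (fun i j => i == j) = k.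
Proof.
rewrite /count2 -[RHS]muln1 -[k in k * 1]subn0 -sum_nat_const_nat.
apply: eq_big_nat => i /andP[_ ik].
have -> : \sum_(0 <= j < k) (i == j : nat) = \sum_(0 <= j < k | j == i) 1.
  by rewrite [RHS]big_mkcond; apply: eq_bigr => j _; rewrite eq_sym.
by rewrite big_nat1_eq ik.
Qed.

Lemma sum_neq_nat i k : i < k -> \sum_(0 <= j < k) (j != i : nat) = k.-1.
Proof.
move=> ik.
have : \sum_(0 <= j < k) (j != i : nat) + \sum_(0 <= j < k | j == i) 1 = k.
  rewrite [X in _ + X]big_mkcond -big_split /= -[RHS]muln1 -[k in k * 1]subn0.
  by rewrite -sum_nat_const_nat; apply: eq_bigr => j _; case: (j == i).
rewrite big_nat1_eq ik /=; lia.
Qed.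

Lemma sum_ltn_nat c k : \sum_(0 <= i < k) (i < c : nat) = minn k c.
Proof.
elim: k => [|k IH]; first by rewrite big_geq // min0n.
by rewrite big_nat_recr // IH; case: (ltnP k c) => /= kc; lia.
Qed.

Lemma sum_late_nat l k : \sum_(0 <= i < k) (k < i + l : nat) <= l.-1.
Proof.
rewrite big_nat_rev /= (@eq_big_nat _ _ _ 0 k _ (fun i => (i < l.-1 : nat))).
  by rewrite sum_ltn_nat geq_minr.
by move=> i ik; congr nat_of_bool; apply/idP/idP; lia.
Qed.

Lemma telescope_nat (a b : nat -> nat) N l :
  (forall m, a m = b m + a m.+1) -> a N = 0 -> l <= N ->
  a l = \sum_(l <= m < N) b m.
Proof.
move=> ab aN0 lN.
have partial k : a l = \sum_(l <= m < l + k) b m + a (l + k).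
  elim: k => [|k IH]; first by rewrite addn0 big_geq.
  by rewrite IH ab addnS big_nat_recr ?leq_addr // addnA.
by rewrite (partial (N - l)) subnKC // aN0 addn0.
Qed.

Lemma sum_tails_nat (c : nat -> nat) l N :
  \sum_(l <= m < N) \sum_(m <= k < N) c k = \sum_(l <= k < N) (k - l + 1) * c k.
Proof.
elim: N => [|N IH]; first by rewrite !big_geq.
have [lN | Nl] := leqP l N; last by rewrite !big_geq.
have extend : \sum_(l <= m < N) \sum_(m <= k < N.+1) c k =
              \sum_(l <= m < N) (\sum_(m <= k < N) c k + c N).
  by apply: eq_big_nat => m /andP[_ mN]; rewrite big_nat_recr // ltnW.
rewrite big_nat_recr // [RHS]big_nat_recr //= big_nat1 extend big_split /= IH.
by rewrite sum_nat_const_nat -addnA mulnDl mul1n.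
Qed.

Section RecurrencePlot.
Variables (e : nat -> nat -> bool) (n : nat).

Definition run m i j := [forall k : 'I_m, e (i + k) (j + k)].

Lemma runP m i j : reflect (forall k, k < m -> e (i + k) (j + k)) (run m i j).
Proof.
apply: (iffP forallP) => [H k km | H k]; first exact: (H (Ordinal km)).
exact: H k (ltn_ord k).
Qed.

Lemma run_recl m i j : run m.+1 i j = e i j && run m i.+1 j.+1.
Proof.
apply/runP/andP => [H | [eij /runP H] [|k] km].
- split; first by have := H 0 (ltn0Sn _); rewrite !addn0.
  by apply/runP => k km; have := H k.+1 km; rewrite !addnS !addSn.
- by rewrite !addn0.
- by rewrite !addnS -!addSn; exact: H.
Qed.

Lemma run_recr m i j : run m.+1 i j = run m i j && e (i + m) (j + m).
Proof.
apply/runP/andP => [H | [/runP H eij] k].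
- by split; [apply/runP => k km; apply: H; exact: ltnW | exact: H].
- by rewrite ltnS leq_eqVlt => /orP[/eqP -> // | km]; exact: H.
Qed.

Definition window m i j := [&& i + m <= n, j + m <= n, i != j & run m i j].
Definition left_maximal m i j :=
  window m i j && ((0 < minn i j) ==> ~~ e i.-1 j.-1).
Definition right_maximal m i j := (maxn i j < n - m) ==> ~~ e (i + m) (j + m).
Definition line m i j := left_maximal m i j && right_maximal m i j.

Definition count_windows m := count2 n.+1 (window m).
Definition count_left_maximal m := count2 n.+1 (left_maximal m).
Definition count_lines m := count2 n.+1 (line m).

Lemma window_outside m i j : n < maxn i j + m -> window m i j = false.
Proof.
by rewrite /window; case: (leqP (i + m) n); case: (leqP (j + m) n) => //=; lia.
Qed.

Lemma window_gt m i j : n < m -> window m i j = false.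
Proof. by move=> nm; apply: window_outside; lia. Qed.

Lemma window_extend m i j :
  window m i.+1 j.+1 && ~~ left_maximal m i.+1 j.+1 = window m.+1 i j.
Proof.
rewrite /left_maximal /window run_recl minnSS /= eqSS !addSn !addnS.
by case: (_ <= n); case: (_ <= n); case: (i != j); case: (e i j); case: run.
Qed.

Lemma left_maximal_extend m i j :
  left_maximal m i j && ~~ right_maximal m i j = left_maximal m.+1 i j.
Proof.
rewrite /left_maximal /window /right_maximal run_recr negb_imply negbK.
rewrite gtn_max !ltn_subRL !addnS (addnC m i) (addnC m j).
case: (ltnP (i + m) n) => im; case: (ltnP (j + m) n) => jm /=;
  rewrite ?andbF ?(ltnW im) ?(ltnW jm) //.
by case: (i != j); case: run; case: (_ ==> _); case: e.
Qed.

Lemma count_left_maximal_rec m :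
  count_left_maximal m = count_lines m + count_left_maximal m.+1.
Proof.
apply: count2_add => i j; rewrite -left_maximal_extend /line.
by case: left_maximal; case: right_maximal.
Qed.

Lemma count_windows_rec m :
  count_windows m = count_left_maximal m + count_windows m.+1.
Proof.
rewrite /count_windows (@count2_add _ _ (left_maximal m)
  (fun i j => window m i j && ~~ left_maximal m i j)); last first.
  by move=> i j; rewrite /left_maximal; case: window; case: (_ ==> _).
congr (_ + _); rewrite count2_shift => [|j|i]; last 2 first.
- by rewrite /left_maximal min0n /= andbT andbN.
- by rewrite /left_maximal minn0 /= andbT andbN.
rewrite count2_shrink => [|j|i]; last 2 first.
- by apply: window_outside; lia.
- by apply: window_outside; lia.
by apply: eq_count2 => i j; rewrite window_extend.
Qed.

Lemma count_windows_gt m : n < m -> count_windows m = 0.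
Proof. by move=> nm; apply: big1 => i _; apply: big1 => j _; rewrite window_gt. Qed.

Lemma count_left_maximal_tail m : m <= n.+1 ->
  count_left_maximal m = \sum_(m <= k < n.+1) count_lines k.
Proof.
apply: telescope_nat; first exact: count_left_maximal_rec.
by apply: big1 => i _; apply: big1 => j _; rewrite /left_maximal window_gt.
Qed.

Lemma count_windows_lines m :
  count_windows m = \sum_(m <= k < n.+1) (k - m + 1) * count_lines k.
Proof.
have [mn | nm] := leqP m n.+1; last by rewrite count_windows_gt ?big_geq // ltnW.
rewrite (telescope_nat count_windows_rec (count_windows_gt (ltnSn n)) mn).
rewrite -sum_tails_nat; apply: eq_big_nat => k /andP[_ kn].
exact/count_left_maximal_tail/ltnW.
Qed.

Definition overhang l i j :=
  [&& i != j, ~~ ((i + l <= n) && (j + l <= n)) & run l i j].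

Lemma count_run_split l : 0 < l -> (forall i, e i i) ->
  count2 n (run l) = n + count_windows l + count2 n (overhang l).
Proof.
move=> l0 refl.
have -> : count_windows l = count2 n (window l).
  by apply: count2_shrink => [j|i]; apply: window_outside; lia.
rewrite -[X in X + _ + _]count2_diag /count2 -!big_split; apply: eq_bigr => i _.
rewrite -!big_split; apply: eq_bigr => j _ /=.
have [<- | ij] := eqVneq i j.
  have run_diag : run l i i by apply/runP => k _; exact: refl.
  by rewrite /window /overhang eqxx run_diag /= !andbF.
rewrite /window /overhang ij.
by case: (i + l <= n); case: (j + l <= n); case: run.
Qed.

Lemma count_overhang_le l : count2 n (overhang l) <= 2 * (l.-1 * n.-1).
Proof.
apply: (@leq_trans (count2 n (fun i j => (n < i + l) && (j != i)) +
                     count2 n (fun i j => (n < j + l) && (i != j)))).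
  rewrite -big_split leq_sum // => i _; rewrite -big_split leq_sum // => j _.
  rewrite /overhang !ltnNge (eq_sym j i).
  by case: (i + l <= n); case: (j + l <= n); case: (i != j); case: run.
have late_le : count2 n (fun i j => (n < i + l) && (j != i)) <= l.-1 * n.-1.
  rewrite /count2 (@eq_big_nat _ _ _ 0 n _ (fun i => (n < i + l) * n.-1)).
    by rewrite -big_distrl /= leq_mul2r sum_late_nat orbT.
  move=> i /andP[_ ni]; rewrite -(sum_neq_nat ni) big_distrr /=.
  by apply: eq_bigr => j _; case: (n < i + l); case: (j != i).
rewrite mul2n -addnn leq_add //.
by move: late_le; rewrite /count2 exchange_big_nat.
Qed.

End RecurrencePlot.

Local Open Scope ring_scope.

Theorem mainTheorem6 (R : realType) (X : metricType R) (f : X -> X)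
  (hf : continuous f) (x : X) (l : nat) (hl : (1 <= l)%N)
  (n : nat) (hn : (2 <= n)%N) (eps : R) (heps : 0 < eps) :
  let Delta : R :=
    n%:R ^+ 2 * corr_sum f l x n eps
    - (\sum_(l <= m < n.+1) (m - l + 1)%:R * (nlines f x n eps m)%:R)
    - n%:R in
  0 <= Delta <= 2 * (l.-1)%:R * (n.-1)%:R.
Proof.
cbv zeta; set Delta := (_ - _ - _); pose e := rp_entry f x eps.
have e_refl i : e i i by rewrite /e /rp_entry mdistxx ltW.
have bowen_run i j : (bowen f l (iter i f x) (iter j f x) <= eps) = run e l i j.
  apply/bigmax_leP/runP => [[_ le_eps] k kl | run_e].
    by have := le_eps (Ordinal kl) isT; rewrite /e /rp_entry -!iterD !(addnC k).
  split => [|k _]; first exact: ltW.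
  by have := run_e k (ltn_ord k); rewrite /e /rp_entry -!iterD !(addnC k).
have corr_count : n%:R ^+ 2 * corr_sum f l x n eps = (count2 n (run e l))%:R :> R.
  rewrite /corr_sum mulrA mulfV ?mul1r; last by rewrite expf_neq0 // pnatr_eq0; lia.
  rewrite (card_pairs_count2 _ (fun i j => bowen f l (iter i f x) (iter j f x) <= eps)).
  by congr _%:R; apply: eq_count2 => i j; exact: bowen_run.
have lines_count :
    \sum_(l <= m < n.+1) (m - l + 1)%:R * (nlines f x n eps m)%:R =
    (count_windows e n l)%:R :> R.
  rewrite count_windows_lines natr_sum; apply: eq_bigr => m _; rewrite natrM.
  rewrite /nlines (card_pairs_count2 _ (fun i j => is_line f x n eps i j m)).
  congr (_ * _%:R); apply: eq_count2 => i j.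
  by rewrite /is_line /line /left_maximal /right_maximal /window /run !andbA.
have -> : Delta = (count2 n (overhang e n l))%:R.
  rewrite /Delta corr_count lines_count (@count_run_split e n l hl e_refl).
  by rewrite !natrD; ring.
by rewrite ler0n /= -!natrM ler_nat -mulnA count_overhang_le.
Qed.
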